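(* Let $A$ be a unital associative ring, $I\subset A$ a two-sided ideal, $p$ a prime and $v$ a positive integer. For every pseudo-free left $\{I^m\}$-module $\{P_m\}$ there exists both a special augmented complex and a $p^v$-special augmented complex over $\{P_m\}$.
   Context: A left $\{I^m\}$-module $\{M_m\}_{m\geqslant1}$ is a pro-abelian group (transition maps $\lambda_{k,m}$, $k\geqslant m$) with each $M_m$ a left module over the non-unital ring $I^m$ and $\lambda_{k,m}(ax)=a\lambda_{k,m}(x)$ for $a\in I^k$. Homomorphisms are families of $I^m$-linear maps commuting with transition maps. $\{P_m\}$ is pseudo-free if there are $I^m$-isomorphisms $\varphi_m\colon I^m\otimes L_m\to P_m$, $L_m$ free abelian, and maps $\sigma_{k,m}\colon L_k\to L_m$ with $\lambda_{k,m}\varphi_k=\varphi_m(\iota\otimes\sigma_{k,m})$. A homomorphism $f$ from pseudo-free $\{P_m\}$ is special if there are maps $g_m\colon L_m\to M_m$ compatible with $\sigma,\lambda$ such that $f_m\varphi_m(a\otimes x)=a g_m(x)$; it is $p^v$-special if $\{P_m\}=\{P'_m\}\oplus\{P''_m\}$ (strict direct sum) with both summands pseudo-free, $f$ restricted to $\{P'_m\}$ special, and $f$ restricted to $\{P''_m\}$ equal to $p^v g$ for some homomorphism $g\colon\{P''_m\}\to\{M_m\}$. An augmented complex over $\{P_m\}$ is a sequence of homomorphisms $\cdots\to\{C_{m,1}\}\xrightarrow{d}\{C_{m,0}\}\xrightarrow{\epsilon}\{P_m\}$ with $d_md_m=0$ and $\epsilon_md_m=0$. It is special if all $\{C_{m,q}\}$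 are pseudo-free, $\epsilon$ is special, and the homology of each augmented complex $C_{m,*}\to P_m$ (including in the degree of $P_m$) is annihilated by $I^m$; it is $p^v$-special if all $\{C_{m,q}\}$ are pseudo-free, $\epsilon$ is $p^v$-special, and that homology is annihilated by $I^m$ and by $p^v$. *)

From HB Require Import structures.
From mathcomp Require Import all_boot all_order all_algebra.
Set Implicit Arguments. Unset Strict Implicit. Unset Printing Implicit Defensive.
Import GRing.Theory.
Local Open Scope ring_scope.

Section Defs.
Variable A : pzRingType.

Definition two_sided_ideal (I : A -> Prop) : Prop :=
  [/\ I 0, (forall x y, I x -> I y -> I (x + y)), (forall x, I x -> I (- x)),
      (forall r x, I x -> I (r * x)) & (forall r x, I x -> I (x * r))].

(* I^m : the additive subgroup of A generated by the products a_1 ... a_m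
   with all a_i in I (used only for m >= 1). *)
Inductive Ipow (I : A -> Prop) (m : nat) : A -> Prop :=
  | Ipow_prod (s : seq A) : size s = m -> (forall a, a \in s -> I a) ->
      Ipow I m (\prod_(a <- s) a)
  | Ipow_0 : Ipow I m 0
  | Ipow_D x y : Ipow I m x -> Ipow I m y -> Ipow I m (x + y)
  | Ipow_N x : Ipow I m x -> Ipow I m (- x).

Definition additive_map (U V : zmodType) (f : U -> V) : Prop :=
  forall x y, f (x + y) = f x + f y.

(* Data of a family {M_m} with transition maps and actions; only indices
   m >= 1 are relevant (index 0 is ignored by all axioms). *)
Record promod := Promod {
  pobj : nat -> zmodType;
  ptr : forall k m, pobj k -> pobj m;     (* lambda_{k,m}, used for k >= m *)
  pact : forall m, A -> pobj m -> pobj m  (* action, used for a in I^m *)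
}.
Arguments pobj p m : clear implicits.
Arguments ptr p k m _ : clear implicits.
Arguments pact p m _ _ : clear implicits.

Definition is_promod (I : A -> Prop) (M : promod) : Prop :=
  [/\ (forall k m, (0 < m)%N -> (m <= k)%N -> additive_map (ptr M k m)),
      (forall m x, (0 < m)%N -> ptr M m m x = x),
      (forall l k m x, (0 < m)%N -> (m <= k)%N -> (k <= l)%N ->
          ptr M k m (ptr M l k x) = ptr M l m x),
      (forall m a b x y, (0 < m)%N -> Ipow I m a -> Ipow I m b ->
          [/\ pact M m a (x + y) = pact M m a x + pact M m a y,
              pact M m (a + b) x = pact M m a x + pact M m b x &
              pact M m (a * b) x = pact M m a (pact M m b x)]) &
      (forall k m a x, (0 < m)%N -> (m <= k)%N -> Ipow I k a ->
          ptr M k m (pact M k a x) = pact M m a (ptr M k m x))].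

Definition is_hom (I : A -> Prop) (M N : promod)
    (f : forall m, pobj M m -> pobj N m) : Prop :=
  [/\ (forall m, (0 < m)%N -> additive_map (f m)),
      (forall m a x, (0 < m)%N -> Ipow I m a -> f m (pact M m a x) = pact N m a (f m x)) &
      (forall k m x, (0 < m)%N -> (m <= k)%N -> ptr N k m (f k x) = f m (ptr M k m x))].

Definition free_abelian (L : zmodType) : Prop :=
  exists (B : eqType) (e : B -> L),
    (forall x : L, exists (s : seq B) (c : B -> int),
        x = \sum_(b <- s) e b *~ c b) /\
    (forall (s : seq B) (c : B -> int), uniq s ->
        \sum_(b <- s) e b *~ c b = 0 -> forall b, b \in s -> c b = 0).

Definition biadditive (J : A -> Prop) (L N : zmodType) (h : A -> L -> N) : Prop :=
  (forall a b x, J a -> J b -> h (a + b) x = h a x + h b x) /\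
  (forall a x y, J a -> h a (x + y) = h a x + h a y).

(* (P, beta) is a tensor product J (x)_Z L, beta a x = phi (a (x) x),
   i.e. beta induces an isomorphism J (x) L -> P (universal property). *)
Definition is_tensor (J : A -> Prop) (L P : zmodType) (beta : A -> L -> P) : Prop :=
  biadditive J beta /\
  forall (N : zmodType) (h : A -> L -> N), biadditive J h ->
    (exists phi : P -> N, additive_map phi /\
        forall a x, J a -> phi (beta a x) = h a x) /\
    (forall phi1 phi2 : P -> N, additive_map phi1 -> additive_map phi2 ->
        (forall a x, J a -> phi1 (beta a x) = phi2 (beta a x)) ->
        forall y, phi1 y = phi2 y).

(* pseudo-free structure: L_m, phi_m (through beta_m a x = phi_m (a (x) x)),
   sigma_{k,m} *)
Record pfstruct (M : promod) := PFStruct {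
  pfL : nat -> zmodType;
  pfbeta : forall m, A -> pfL m -> pobj M m;
  pfsigma : forall k m, pfL k -> pfL m
}.
Arguments pfL {M} p m.
Arguments pfbeta {M} p m _ _.
Arguments pfsigma {M} p k m _.

Definition is_pfstruct (I : A -> Prop) (M : promod) (S : pfstruct M) : Prop :=
  forall m, (0 < m)%N ->
  [/\ free_abelian (pfL S m),
      is_tensor (Ipow I m) (pfbeta S m),
      (forall a b x, Ipow I m a -> Ipow I m b ->
          pact M m a (pfbeta S m b x) = pfbeta S m (a * b) x),
      (forall k, (m <= k)%N -> additive_map (pfsigma S k m)) &
      (forall k a x, (m <= k)%N -> Ipow I k a ->
          ptr M k m (pfbeta S k a x) = pfbeta S m a (pfsigma S k m x))].

Definition pseudo_free (I : A -> Prop) (M : promod) : Prop :=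
  exists S : pfstruct M, is_pfstruct I S.

Definition special (I : A -> Prop) (M N : promod) (S : pfstruct M)
    (f : forall m, pobj M m -> pobj N m) : Prop :=
  exists g : forall m, pfL S m -> pobj N m,
  [/\ (forall m, (0 < m)%N -> additive_map (g m)),
      (forall k m x, (0 < m)%N -> (m <= k)%N ->
          ptr N k m (g k x) = g m (pfsigma S k m x)) &
      (forall m a x, (0 < m)%N -> Ipow I m a ->
          f m (pfbeta S m a x) = pact N m a (g m x))].

(* p^v-special homomorphism (n = p^v): strict direct sum decomposition
   M = M' (+) M'' (given by homomorphisms i', i'' whose sum is a levelwise
   bijection) into pseudo-free summands, f special on M', n * g on M''. *)
Definition pv_special (I : A -> Prop) (n : nat) (M N : promod)
    (f : forall m, pobj M m -> pobj N m) : Prop :=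
  exists (M' M'' : promod) (i' : forall m, pobj M' m -> pobj M m)
         (i'' : forall m, pobj M'' m -> pobj M m)
         (S' : pfstruct M') (S'' : pfstruct M''),
  [/\ [/\ is_promod I M', is_promod I M'', is_hom I i' & is_hom I i''],
      (forall m, (0 < m)%N ->
         bijective (fun xy : pobj M' m * pobj M'' m => i' m xy.1 + i'' m xy.2)),
      is_pfstruct I S' /\ is_pfstruct I S'',
      special I S' (fun m x => f m (i' m x)) &
      exists g : forall m, pobj M'' m -> pobj N m,
        is_hom I g /\ forall m x, (0 < m)%N -> f m (i'' m x) = g m x *+ n].

(* augmented complex  ... -> C_1 -d_0-> C_0 -eps-> P ;
   d q : C_{q+1} -> C_q *)
Definition aug_complex (I : A -> Prop) (P : promod) (C : nat -> promod)
    (d : forall q m, pobj (C q.+1) m -> pobj (C q) m)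
    (eps : forall m, pobj (C 0%N) m -> pobj P m) : Prop :=
  [/\ (forall q, is_promod I (C q)), (forall q, is_hom I (d q)), is_hom I eps,
      (forall q m x, (0 < m)%N -> d q m (d q.+1 m x) = 0) &
      (forall m x, (0 < m)%N -> eps m (d 0%N m x) = 0)].

(* every element of the homology of C_{m,*} -> P_m (including the degree of
   P_m) is killed by the operator T *)
Definition homology_killed_by (P : promod) (C : nat -> promod)
    (d : forall q m, pobj (C q.+1) m -> pobj (C q) m)
    (eps : forall m, pobj (C 0%N) m -> pobj P m)
    (T : forall (M : promod) m, pobj M m -> pobj M m -> Prop) (m : nat) : Prop :=
  [/\ (forall y, exists x, T P m y (eps m x)),
      (forall x, eps m x = 0 -> exists z, T (C 0%N) m x (d 0%N m z)) &
      (forall q x, d q m x = 0 -> exists z, T (C q.+1) m x (d q.+1 m z))].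

(* T x y : "a x = y" for a given a in I^m, resp. "p^v x = y" *)
Definition special_complex (I : A -> Prop) (P : promod) : Prop :=
  exists (C : nat -> promod) (d : forall q m, pobj (C q.+1) m -> pobj (C q) m)
         (eps : forall m, pobj (C 0%N) m -> pobj P m)
         (SC : forall q, pfstruct (C q)),
  [/\ aug_complex I d eps,
      (forall q, is_pfstruct I (SC q)),
      special I (SC 0%N) eps &
      (forall m, (0 < m)%N -> forall a, Ipow I m a ->
         homology_killed_by d eps (fun M m x y => pact M m a x = y) m)].

Definition pv_special_complex (I : A -> Prop) (n : nat) (P : promod) : Prop :=
  exists (C : nat -> promod) (d : forall q m, pobj (C q.+1) m -> pobj (C q) m)
         (eps : forall m, pobj (C 0%N) m -> pobj P m),
  [/\ aug_complex I d eps,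
      (forall q, pseudo_free I (C q)),
      pv_special I n eps &
      (forall m, (0 < m)%N ->
         (forall a, Ipow I m a ->
            homology_killed_by d eps (fun M m x y => pact M m a x = y) m) /\
         homology_killed_by d eps (fun M m x y => x *+ n = y) m)].
End Defs.

(* A stage is a homomorphism
   d : C -> B together with an endomorphism chi of C such that d chi = 0 and
   chi = n on the cycles of d.  The next module is F (+) C, where F is the
   pseudo-free module with F_m = I^m (x) Z[ker d_m], and the next differential
   sends (a (x) x, y) to a x + chi y.  Hence a cycle x satisfies
   a x = d'(a (x) x, 0) for a in I^m and n x = d'(0, x), so I^m and n kill the
   homology, while chi' = n - (0, d') restores the invariant.  The first stage
   is d = 0 on P with chi = n, so the augmentation is (f, y) |-> f + n y: it
   is special for n = 0 and n-special for any n. *)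

From HB Require Import structures.
From mathcomp Require Import all_boot all_order all_algebra.
From mathcomp Require Import finmap boolp.
From mathcomp.multinomials Require Import monalg.

Set Implicit Arguments. Unset Strict Implicit. Unset Printing Implicit Defensive.
Import GRing.Theory.
Local Open Scope ring_scope.

Section AdditiveMap.
Variables (U V : zmodType) (f : U -> V).
Hypothesis f_add : additive_map f.

Lemma additive_map0 : f 0 = 0.
Proof. by apply: (addrI (f 0)); rewrite -f_add !addr0. Qed.

Lemma additive_mapN x : f (- x) = - f x.
Proof. by apply: (addrI (f x)); rewrite -f_add !subrr additive_map0. Qed.

Lemma additive_map_sum (J : Type) (r : seq J) (F : J -> U) :
  f (\sum_(i <- r) F i) = \sum_(i <- r) f (F i).
Proof. exact: (big_morph f f_add additive_map0). Qed.

Lemma additive_mapMn x n : f (x *+ n) = f x *+ n.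
Proof. by elim: n => [|n IHn]; rewrite ?mulr0n ?additive_map0 // !mulrS f_add IHn. Qed.

Lemma additive_mapMz x z : f (x *~ z) = f x *~ z.
Proof. by case: z => n; rewrite ?NegzE ?mulrNz ?additive_mapN additive_mapMn. Qed.
End AdditiveMap.

Section IdealPowers.
Variables (A : pzRingType) (I : A -> Prop).
Hypothesis hI : two_sided_ideal I.

Lemma IpowMl m r x : (0 < m)%N -> Ipow I m x -> Ipow I m (r * x).
Proof.
move=> m_gt0; elim=> [s s_sz sI | | y z _ Iy _ Iz | y _ Iy].
- case: s s_sz sI => [|a s] /= s_sz sI; first by rewrite -s_sz in m_gt0.
  rewrite big_cons mulrA.
  have -> : r * a * \prod_(b <- s) b = \prod_(b <- r * a :: s) b by rewrite big_cons.
  apply: Ipow_prod => // b; rewrite inE => /predU1P [->|bs]; last exact/sI/mem_behead.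
  by case: hI => _ _ _ + _; apply; apply/sI/mem_head.
- by rewrite mulr0; apply: Ipow_0.
- by rewrite mulrDr; apply: Ipow_D.
- by rewrite mulrN; apply: Ipow_N.
Qed.

Lemma IpowS k x : (0 < k)%N -> Ipow I k.+1 x -> Ipow I k x.
Proof.
move=> k_gt0; elim=> [s s_sz sI | | y z _ Iy _ Iz | y _ Iy].
- case: s s_sz sI => [|a [|b s]] // s_sz sI; first by case: s_sz k_gt0 => <-.
  rewrite !big_cons mulrA.
  have -> : a * b * \prod_(c <- s) c = \prod_(c <- a * b :: s) c by rewrite big_cons.
  apply: Ipow_prod => [|c]; first by case: s_sz.
  rewrite inE => /predU1P [->|cs]; last by apply: sI; rewrite !inE cs !orbT.
  by case: hI => _ _ _ _; apply; apply/sI/mem_head.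
- exact: Ipow_0.
- exact: Ipow_D.
- exact: Ipow_N.
Qed.

Lemma Ipow_antimono k m x : (0 < m)%N -> (m <= k)%N -> Ipow I k x -> Ipow I m x.
Proof.
move=> m_gt0; elim: k => [|k IHk]; first by rewrite leqn0 => /eqP m0; rewrite m0 in m_gt0.
rewrite leq_eqVlt => /predU1P [-> //|mk] Ix.
by rewrite ltnS in mk; apply: IHk => //; apply: IpowS => //; apply: leq_trans mk.
Qed.

Definition ipow_pred m : {pred A} := fun a => `[< Ipow I m a >].

Lemma ipow_predP m a : reflect (Ipow I m a) (a \in ipow_pred m).
Proof. exact: asboolP. Qed.

Lemma ipow_zmod_closed m : zmod_closed (ipow_pred m).
Proof.
split=> [|a b /ipow_predP Ia /ipow_predP Ib]; apply/ipow_predP; first exact: Ipow_0.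
by apply: Ipow_D => //; apply: Ipow_N.
Qed.

HB.instance Definition _ m := GRing.isZmodClosed.Build A (ipow_pred m) (ipow_zmod_closed m).

Lemma Ipow_Mz m a z : Ipow I m a -> Ipow I m (a *~ z).
Proof. by move/ipow_predP=> Ia; apply/ipow_predP; rewrite rpredMz. Qed.
End IdealPowers.

Section Coefficients.
Variables (A : pzRingType) (I : A -> Prop) (m : nat).

Definition coef := {a : A | a \in ipow_pred I m}.
HB.instance Definition _ := [isSub of coef for @sval _ _].
HB.instance Definition _ := [Choice of coef by <:].
HB.instance Definition _ := [SubChoice_isSubZmodule of coef by <:].

Definition to_coef (a : A) : coef := insubd 0 a.

Lemma coefP (c : coef) : Ipow I m (val c).
Proof. exact/ipow_predP/valP. Qed.

Lemma to_coefK a : Ipow I m a -> val (to_coef a) = a.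
Proof. by move=> Ia; apply/insubdK/ipow_predP. Qed.

Lemma valK_coef (c : coef) : to_coef (val c) = c.
Proof. by apply: val_inj; rewrite to_coefK //; apply: coefP. Qed.

Lemma to_coefD a b : Ipow I m a -> Ipow I m b -> to_coef (a + b) = to_coef a + to_coef b.
Proof. by move=> Ia Ib; apply: val_inj; rewrite raddfD /= !to_coefK //; apply: Ipow_D. Qed.

Lemma to_coef0 : to_coef 0 = 0.
Proof. by apply: val_inj; rewrite to_coefK //; apply: Ipow_0. Qed.
End Coefficients.

Lemma Ipow_coefMl (A : pzRingType) (I : A -> Prop) m r (c : coef I m) :
  two_sided_ideal I -> (0 < m)%N -> Ipow I m (r * val c).
Proof. by move=> hI m_gt0; apply: IpowMl (coefP c). Qed.

Section MalgLift.
Variables (K : choiceType) (G N : zmodType).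

Definition malg_lift (F : K -> G -> N) (g : {malg G[K]}) : N :=
  \sum_(k <- msupp g) F k g@_k.

Lemma malg_liftEw F g (D : {fset K}) : (forall k, F k 0 = 0) -> (msupp g `<=` D)%fset ->
  malg_lift F g = \sum_(k <- D) F k g@_k.
Proof.
move=> F0 gD; rewrite /malg_lift (big_fset_incl _ gD) // => k _ /mcoeff_outdom ->.
exact: F0.
Qed.

Lemma malg_lift_additive F : (forall k, additive_map (F k)) -> additive_map (malg_lift F).
Proof.
move=> F_add g1 g2; have F0 k := additive_map0 (F_add k).
rewrite !(@malg_liftEw _ _ (msupp g1 `|` msupp g2)%fset) ?fsubsetUl ?fsubsetUr ?msuppD_le //.
by rewrite -big_split; apply: eq_bigr => k _; rewrite mcoeffD F_add.
Qed.

Lemma malg_liftU F k c : F k 0 = 0 -> malg_lift F << c *g k >> = F k c.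
Proof.
move=> F0; rewrite /malg_lift msuppU; case: eqP => [->|_]; last first.
  by rewrite big_seq_fset1 mcoeffUU.
by rewrite big_seq_fset0.
Qed.

Lemma malg_lift0 F : malg_lift F 0 = 0.
Proof. by rewrite /malg_lift msupp0 big_seq_fset0. Qed.

Lemma malg_liftDf F F' g :
  malg_lift (fun k c => F k c + F' k c) g = malg_lift F g + malg_lift F' g.
Proof. exact: big_split. Qed.

Lemma eq_malg_lift F F' g : (forall k c, F k c = F' k c) -> malg_lift F g = malg_lift F' g.
Proof. by move=> eqF; apply: eq_bigr => k _; apply: eqF. Qed.
End MalgLift.

Lemma malg_lift_comp (K : choiceType) (G N N' : zmodType) (Phi : N -> N')
    (F : K -> G -> N) g :
  additive_map Phi -> Phi (malg_lift F g) = malg_lift (fun k c => Phi (F k c)) g.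
Proof. by move=> Phi_add; rewrite /malg_lift (additive_map_sum Phi_add). Qed.

Lemma malg_lift_mkmalgU (K : choiceType) (G : zmodType) (g : {malg G[K]}) :
  malg_lift (fun k c => << c *g k >>) g = g.
Proof. by rewrite /malg_lift -monalgE. Qed.

Lemma malg_lift_of_additive (K : choiceType) (G N : zmodType) (Phi : {malg G[K]} -> N) g :
  additive_map Phi -> Phi g = malg_lift (fun k c => Phi << c *g k >>) g.
Proof. by move=> Phi_add; rewrite -malg_lift_comp // malg_lift_mkmalgU. Qed.

Lemma free_abelian_malg (K : choiceType) : free_abelian {malg int[K]}.
Proof.
have mkmalgUz (k : K) z : << z *g k >> = << (1 : int) *g k >> *~ z.
  by rewrite -raddfMz intz.
exists K, (fun k => << (1 : int) *g k >>); split.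
- move=> g; exists (msupp g : seq K), (fun k => g@_k).
  by rewrite {1}(monalgE g); apply: eq_bigr => k _; rewrite mkmalgUz.
- move=> s c s_uniq sum0 k ks.
  have := congr1 (mcoeff k) sum0; rewrite raddf_sum mcoeff0 (bigD1_seq k) //= big1.
    by rewrite -mkmalgUz mcoeffUU addr0.
  by move=> k' /negbTE k'k; rewrite -mkmalgUz mcoeffU k'k.
Qed.

Local Notation lam M k m := (@ptr _ M k m).
Local Notation act M m := (@pact _ M m).
Local Notation beta S m := (@pfbeta _ _ S m).
Local Notation sigma S k m := (@pfsigma _ _ S k m).

Section ProModuleTheory.
Variables (A : pzRingType) (I : A -> Prop) (M : promod A).
Hypothesis hM : is_promod I M.

Lemma lam_additive k m : (0 < m)%N -> (m <= k)%N -> additive_map (lam M k m).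
Proof. by case: hM => + _ _ _ _; apply. Qed.

Lemma lam_id m x : (0 < m)%N -> lam M m m x = x.
Proof. by case: hM => _ + _ _ _; apply. Qed.

Lemma lam_comp l k m x : (0 < m)%N -> (m <= k)%N -> (k <= l)%N ->
  lam M k m (lam M l k x) = lam M l m x.
Proof. by case: hM => _ _ + _ _; apply. Qed.

Lemma act_additive m a : (0 < m)%N -> Ipow I m a -> additive_map (act M m a).
Proof. by case: hM => _ _ _ + _ m_gt0 Ia x y; case/(_ m a a x y m_gt0 Ia Ia). Qed.

Lemma actDl m a b x : (0 < m)%N -> Ipow I m a -> Ipow I m b ->
  act M m (a + b) x = act M m a x + act M m b x.
Proof. by case: hM => _ _ _ + _ m_gt0 Ia Ib; case/(_ m a b x x m_gt0 Ia Ib). Qed.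

Lemma actM m a b x : (0 < m)%N -> Ipow I m a -> Ipow I m b ->
  act M m (a * b) x = act M m a (act M m b x).
Proof. by case: hM => _ _ _ + _ m_gt0 Ia Ib; case/(_ m a b x x m_gt0 Ia Ib). Qed.

Lemma lam_act k m a x : (0 < m)%N -> (m <= k)%N -> Ipow I k a ->
  lam M k m (act M k a x) = act M m a (lam M k m x).
Proof. by case: hM => _ _ _ _; apply. Qed.

Lemma act_coef_additive m x : (0 < m)%N ->
  additive_map (fun c : coef I m => act M m (val c) x).
Proof. by move=> m_gt0 c d; rewrite raddfD /= actDl //; apply: coefP. Qed.

Lemma act0l m x : (0 < m)%N -> act M m 0 x = 0.
Proof. by move=> m_gt0; have := additive_map0 (act_coef_additive x m_gt0). Qed.

Lemma actMzl m a z x : (0 < m)%N -> Ipow I m a -> act M m (a *~ z) x = act M m a x *~ z.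
Proof.
move=> m_gt0 Ia; have := additive_mapMz (act_coef_additive x m_gt0) (to_coef I m a) z.
by rewrite raddfMz /= to_coefK.
Qed.
End ProModuleTheory.

Section Cover.
Variables (A : pzRingType) (I : A -> Prop) (M : promod A).
Variables (T : nat -> Type) (tr : forall k m, T k -> T m).
Variable gen : forall m, T m -> pobj M m.
Arguments tr : clear implicits.
Arguments gen : clear implicits.
Hypothesis hI : two_sided_ideal I.

Local Notation K m := (classicType (T m)).

(* [I^m (x) Z[T_m]], as finitely supported functions [T_m -> I^m]. *)
Definition cover_obj m := {malg (coef I m)[K m]}.

Definition cover_tr k m (f : cover_obj k) : cover_obj m :=
  malg_lift (fun (t : K k) c => << to_coef I m (val c) *g (tr k m t : K m) >>) f.

Definition cover_act m a (f : cover_obj m) : cover_obj m :=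
  malg_lift (fun (t : K m) c => << to_coef I m (a * val c) *g t >>) f.

Arguments cover_tr : clear implicits.
Arguments cover_act : clear implicits.

Definition cover : promod A := @Promod A cover_obj cover_tr cover_act.

Lemma cover_trU k m c t :
  cover_tr k m << c *g t >> = << to_coef I m (val c) *g (tr k m t : K m) >>.
Proof. by rewrite /cover_tr malg_liftU // raddf0 to_coef0 monalgU0. Qed.

Lemma cover_tr_additive k m : (0 < m)%N -> (m <= k)%N -> additive_map (cover_tr k m).
Proof.
move=> m_gt0 mk; apply: malg_lift_additive => t c d.
by rewrite raddfD /= to_coefD ?monalgUD //; apply: (Ipow_antimono hI m_gt0 mk (coefP _)).
Qed.

Lemma cover_actU m a c t :
  cover_act m a << c *g t >> = << to_coef I m (a * val c) *g t >>.
Proof. by rewrite /cover_act malg_liftU // raddf0 mulr0 to_coef0 monalgU0. Qed.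

Lemma cover_act_additive m a : (0 < m)%N -> additive_map (cover_act m a).
Proof.
move=> m_gt0; apply: malg_lift_additive => t c d.
by rewrite raddfD /= mulrDr to_coefD ?monalgUD //; apply: Ipow_coefMl.
Qed.

Lemma is_promod_cover :
  (forall m t, (0 < m)%N -> tr m m t = t) ->
  (forall l k m t, (0 < m)%N -> (m <= k)%N -> (k <= l)%N ->
      tr k m (tr l k t) = tr l m t) ->
  is_promod I cover.
Proof.
move=> tr_id tr_comp; split=> /=.
- exact: cover_tr_additive.
- move=> m f m_gt0; rewrite -[RHS]malg_lift_mkmalgU; apply: eq_malg_lift => t c.
  by rewrite valK_coef tr_id.
- move=> l k m f m_gt0 mk kl; have k_gt0 := leq_trans m_gt0 mk.
  rewrite (malg_lift_comp _ _ (cover_tr_additive m_gt0 mk)); apply: eq_malg_lift => t c.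
  by rewrite cover_trU to_coefK ?tr_comp //; apply: (Ipow_antimono hI k_gt0 kl (coefP _)).
- move=> m a b f g m_gt0 Ia Ib; split.
  + exact: cover_act_additive.
  + rewrite -malg_liftDf; apply: eq_malg_lift => t c.
    by rewrite mulrDl to_coefD ?monalgUD //; apply: Ipow_coefMl.
  + rewrite (malg_lift_comp _ _ (cover_act_additive a m_gt0)); apply: eq_malg_lift => t c.
    by rewrite cover_actU to_coefK ?mulrA //; apply: Ipow_coefMl.
- move=> k m a f m_gt0 mk Ia.
  rewrite (malg_lift_comp _ _ (cover_tr_additive m_gt0 mk)).
  rewrite (malg_lift_comp _ _ (cover_act_additive a m_gt0)); apply: eq_malg_lift => t c.
  rewrite cover_trU cover_actU !to_coefK //; first exact: (Ipow_antimono hI m_gt0 mk (coefP c)).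
  exact: Ipow_coefMl hI (leq_trans m_gt0 mk).
Qed.

Definition cover_L m := {malg int[K m]}.

Definition cover_beta m a (x : cover_L m) : cover_obj m :=
  malg_lift (fun (t : K m) (z : int) => << to_coef I m (a *~ z) *g t >>) x.

Definition cover_sigma k m (x : cover_L k) : cover_L m :=
  malg_lift (fun (t : K k) (z : int) => << z *g (tr k m t : K m) >>) x.

Arguments cover_beta : clear implicits.
Arguments cover_sigma : clear implicits.

Definition cover_pf : pfstruct cover := @PFStruct A cover cover_L cover_beta cover_sigma.

Lemma cover_betaU m a z t : cover_beta m a << z *g t >> = << to_coef I m (a *~ z) *g t >>.
Proof. by rewrite /cover_beta malg_liftU // mulr0z to_coef0 monalgU0. Qed.

Lemma cover_beta_additive m a : Ipow I m a -> additive_map (cover_beta m a).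
Proof.
move=> Ia; apply: malg_lift_additive => t y z.
by rewrite mulrzDr to_coefD ?monalgUD //; apply: Ipow_Mz.
Qed.

Lemma cover_sigma_additive k m : additive_map (cover_sigma k m).
Proof. by apply: malg_lift_additive => t y z; rewrite monalgUD. Qed.

Lemma cover_beta_biadditive m : biadditive (Ipow I m) (cover_beta m).
Proof.
split=> [a b x Ia Ib | a x y Ia]; last exact: cover_beta_additive.
rewrite -malg_liftDf; apply: eq_malg_lift => t z.
by rewrite mulrzDl to_coefD ?monalgUD //; apply: Ipow_Mz.
Qed.

Lemma is_tensor_cover_beta m : is_tensor (Ipow I m) (cover_beta m).
Proof.
split=> [|N h [hDl hDr]]; first exact: cover_beta_biadditive.
have h_coef y : additive_map (fun c : coef I m => h (val c) y).
  by move=> c d; rewrite raddfD /= hDl //; apply: coefP.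
split.
- pose phi := malg_lift (fun (t : K m) (c : coef I m) => h (val c) << (1 : int) *g t >>).
  have phi_add : additive_map phi.
    by apply: malg_lift_additive => t; apply: h_coef.
  exists phi; split=> // a x Ia.
  have ha : additive_map (h a) by move=> y z; apply: hDr.
  rewrite (malg_lift_comp _ _ phi_add) (malg_lift_of_additive _ ha).
  apply: eq_malg_lift => t z.
  rewrite /phi malg_liftU; last exact: additive_map0 (h_coef _).
  rewrite to_coefK; last exact: Ipow_Mz.
  have := additive_mapMz (h_coef << (1 : int) *g t >>) (to_coef I m a) z.
  rewrite raddfMz /= to_coefK // => ->.
  by rewrite -(additive_mapMz ha) -raddfMz intz.
- move=> phi1 phi2 phi1_add phi2_add eq_phi y.
  rewrite (malg_lift_of_additive _ phi1_add) (malg_lift_of_additive _ phi2_add).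
  apply: eq_malg_lift => t c.
  have -> : << c *g t >> = cover_beta m (val c) << (1 : int) *g t >>.
    by rewrite cover_betaU mulr1z valK_coef.
  exact/eq_phi/coefP.
Qed.

Lemma is_pfstruct_cover : is_pfstruct I cover_pf.
Proof.
move=> m m_gt0; split=> /=.
- exact: free_abelian_malg.
- exact: is_tensor_cover_beta.
- move=> a b x Ia Ib.
  rewrite (malg_lift_comp _ _ (cover_act_additive a m_gt0)); apply: eq_malg_lift => t z.
  by rewrite cover_actU to_coefK ?mulrzAr //; apply: Ipow_Mz.
- by move=> k _; apply: cover_sigma_additive.
- move=> k a x mk Ia; have Ia_m := Ipow_antimono hI m_gt0 mk Ia.
  rewrite (malg_lift_comp _ _ (cover_beta_additive Ia_m)).
  rewrite (malg_lift_comp _ _ (cover_tr_additive m_gt0 mk)); apply: eq_malg_lift => t z.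
  by rewrite cover_trU cover_betaU to_coefK //; apply: Ipow_Mz.
Qed.

Definition cover_eval m (f : cover_obj m) : pobj M m :=
  malg_lift (fun (t : K m) c => act M m (val c) (gen m t)) f.

Definition cover_gen m (x : cover_L m) : pobj M m :=
  malg_lift (fun (t : K m) (z : int) => gen m t *~ z) x.

Arguments cover_eval : clear implicits.
Arguments cover_gen : clear implicits.

Section CoverEval.
Hypothesis hM : is_promod I M.
Hypothesis gen_tr : forall k m t, (0 < m)%N -> (m <= k)%N ->
  gen m (tr k m t) = lam M k m (gen k t).

Lemma cover_evalU m c t : (0 < m)%N -> cover_eval m << c *g t >> = act M m (val c) (gen m t).
Proof. by move=> m_gt0; rewrite /cover_eval malg_liftU // raddf0 (act0l hM). Qed.

Lemma cover_eval_additive m : (0 < m)%N -> additive_map (cover_eval m).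
Proof.
move=> m_gt0; apply: malg_lift_additive => t c d.
by rewrite raddfD /= (actDl hM) //; apply: coefP.
Qed.

Lemma cover_gen_additive m : additive_map (cover_gen m).
Proof. by apply: malg_lift_additive => t y z; rewrite mulrzDr. Qed.

Lemma is_hom_cover_eval : is_hom I (M := cover) cover_eval.
Proof.
split=> [|m a f m_gt0 Ia | k m f m_gt0 mk] /=; first exact: cover_eval_additive.
- rewrite (malg_lift_comp _ _ (cover_eval_additive m_gt0)).
  rewrite (malg_lift_comp _ _ (act_additive hM m_gt0 Ia)); apply: eq_malg_lift => t c.
  rewrite cover_evalU // to_coefK ?(actM hM) //; last exact: Ipow_coefMl.
  exact: coefP.
- rewrite (malg_lift_comp _ _ (cover_eval_additive m_gt0)).
  rewrite (malg_lift_comp _ _ (lam_additive hM m_gt0 mk)); apply: eq_malg_lift => t c.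
  have Ic := Ipow_antimono hI m_gt0 mk (coefP c).
  by rewrite cover_evalU // to_coefK // (lam_act hM) ?gen_tr //; apply: coefP.
Qed.

Lemma cover_eval_special : special I cover_pf cover_eval.
Proof.
exists cover_gen; split=> [m _ | k m x m_gt0 mk | m a x m_gt0 Ia] /=.
- exact: cover_gen_additive.
- rewrite (malg_lift_comp _ _ (@cover_gen_additive m)).
  rewrite (malg_lift_comp _ _ (lam_additive hM m_gt0 mk)); apply: eq_malg_lift => t z.
  by rewrite /cover_gen malg_liftU ?mul0rz // (additive_mapMz (lam_additive hM m_gt0 mk)) gen_tr.
- rewrite (malg_lift_comp _ _ (cover_eval_additive m_gt0)).
  rewrite (malg_lift_comp _ _ (act_additive hM m_gt0 Ia)); apply: eq_malg_lift => t z.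
  rewrite cover_evalU // to_coefK; last exact: Ipow_Mz.
  by rewrite (actMzl hM) // (additive_mapMz (act_additive hM m_gt0 Ia)).
Qed.
End CoverEval.
End Cover.

Lemma pairD (U V : zmodType) (x x' : U) (y y' : V) : (x, y) + (x', y') = (x + x', y + y').
Proof. by []. Qed.

Lemma fst_additive (U V : zmodType) : additive_map (@fst U V).
Proof. by []. Qed.

Lemma snd_additive (U V : zmodType) : additive_map (@snd U V).
Proof. by []. Qed.

Lemma pairMz (U V : zmodType) (x : U) (y : V) z : (x, y) *~ z = (x *~ z, y *~ z).
Proof.
rewrite [LHS]surjective_pairing.
by rewrite (additive_mapMz (@fst_additive _ _)) (additive_mapMz (@snd_additive _ _)).
Qed.

Lemma free_abelian_prod (L1 L2 : zmodType) :
  free_abelian L1 -> free_abelian L2 -> free_abelian (L1 * L2)%type.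
Proof.
move=> [B1 [e1 [span1 free1]]] [B2 [e2 [span2 free2]]].
pose e (b : B1 + B2) : L1 * L2 :=
  match b with inl b1 => (e1 b1, 0) | inr b2 => (0, e2 b2) end.
exists (B1 + B2 : eqType)%type, e; split.
- move=> [x1 x2]; have [s1 [c1 ->]] := span1 x1; have [s2 [c2 ->]] := span2 x2.
  exists (map inl s1 ++ map inr s2),
    (fun b => match b with inl b1 => c1 b1 | inr b2 => c2 b2 end).
  rewrite [RHS]surjective_pairing; congr pair.
  + rewrite (additive_map_sum (@fst_additive _ _)) big_cat !big_map /=.
    rewrite [X in _ + X]big1 ?addr0 => [|b _]; last by rewrite pairMz mul0rz.
    by apply: eq_bigr => b _; rewrite pairMz.
  + rewrite (additive_map_sum (@snd_additive _ _)) big_cat !big_map /=.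
    rewrite [X in X + _]big1 ?add0r => [|b _]; last by rewrite pairMz mul0rz.
    by apply: eq_bigr => b _; rewrite pairMz.
- move=> s c s_uniq sum0 [b1|b2] bs.
  + apply: (free1 (pmap (fun b => if b is inl b1 then Some b1 else None) s) (c \o inl)).
    * by apply: (pmap_uniq (g := inl)) => // -[].
    * have := congr1 fst sum0; rewrite (additive_map_sum (@fst_additive _ _)) big_pmap.
      by move=> sum0'; apply: etrans sum0'; apply: eq_bigr => -[b|b] _; rewrite /= pairMz ?mul0rz.
    * by rewrite (can2_mem_pmap (g := inl)) // => -[].
  + apply: (free2 (pmap (fun b => if b is inr b2 then Some b2 else None) s) (c \o inr)).
    * by apply: (pmap_uniq (g := inr)) => // -[].
    * have := congr1 snd sum0; rewrite (additive_map_sum (@snd_additive _ _)) big_pmap.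
      by move=> sum0'; apply: etrans sum0'; apply: eq_bigr => -[b|b] _; rewrite /= pairMz ?mul0rz.
    * by rewrite (can2_mem_pmap (g := inr)) // => -[].
Qed.

Section TensorProd.
Variables (A : pzRingType) (J : A -> Prop) (L1 L2 P1 P2 : zmodType).
Variables (b1 : A -> L1 -> P1) (b2 : A -> L2 -> P2).

Lemma is_tensor_prod : is_tensor J b1 -> is_tensor J b2 ->
  is_tensor J (fun a (x : L1 * L2) => (b1 a x.1, b2 a x.2) : P1 * P2).
Proof.
move=> [[b1Dl b1Dr] univ1] [[b2Dl b2Dr] univ2].
split=> [|N h [hDl hDr]].
  split=> [a b x Ja Jb | a x y Ja] /=; first by rewrite b1Dl // b2Dl.
  by rewrite b1Dr // b2Dr.
have h1 : biadditive J (fun a (u : L1) => h a (u, 0)).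
  by split=> [a b x Ja Jb | a x y Ja]; rewrite ?hDl // -hDr // pairD addr0.
have h2 : biadditive J (fun a (u : L2) => h a (0, u)).
  by split=> [a b x Ja Jb | a x y Ja]; rewrite ?hDl // -hDr // pairD addr0.
have [[phi1 [phi1_add phi1E]] uniq1] := univ1 N _ h1.
have [[phi2 [phi2_add phi2E]] uniq2] := univ2 N _ h2.
split.
  exists (fun p => phi1 p.1 + phi2 p.2); split=> [x y | a [x1 x2] Ja] /=.
    by rewrite phi1_add phi2_add addrACA.
  by rewrite phi1E // phi2E // -hDr // pairD addr0 add0r.
move=> psi1 psi2 psi1_add psi2_add eq_psi [y1 y2].
have -> : (y1, y2) = (y1, 0) + (0, y2) by rewrite pairD addr0 add0r.
rewrite psi1_add psi2_add; congr (_ + _).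
- apply: (uniq1 (fun u => psi1 (u, 0)) (fun u => psi2 (u, 0))).
  + by move=> u u'; rewrite -psi1_add pairD addr0.
  + by move=> u u'; rewrite -psi2_add pairD addr0.
  + move=> a x Ja; have := eq_psi a (x, 0) Ja.
    by rewrite /= (additive_map0 (fun u u' => b2Dr a u u' Ja)).
- apply: (uniq2 (fun u => psi1 (0, u)) (fun u => psi2 (0, u))).
  + by move=> u u'; rewrite -psi1_add pairD addr0.
  + by move=> u u'; rewrite -psi2_add pairD addr0.
  + move=> a x Ja; have := eq_psi a (0, x) Ja.
    by rewrite /= (additive_map0 (fun u u' => b1Dr a u u' Ja)).
Qed.
End TensorProd.

Section DirectSum.
Variables (A : pzRingType) (I : A -> Prop) (M1 M2 : promod A).

Definition sum_promod : promod A :=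
  @Promod A (fun m => (pobj M1 m * pobj M2 m)%type)
    (fun k m x => (lam M1 k m x.1, lam M2 k m x.2))
    (fun m a x => (act M1 m a x.1, act M2 m a x.2)).

Lemma is_promod_sum : is_promod I M1 -> is_promod I M2 -> is_promod I sum_promod.
Proof.
move=> hM1 hM2; split=> /=.
- by move=> k m m_gt0 mk x y; rewrite (lam_additive hM1 m_gt0 mk) (lam_additive hM2 m_gt0 mk).
- by move=> m [x1 x2] m_gt0; rewrite (lam_id hM1) ?(lam_id hM2).
- by move=> l k m [x1 x2] m_gt0 mk kl; rewrite (lam_comp hM1) ?(lam_comp hM2).
- move=> m a b x y m_gt0 Ia Ib; split.
  + by rewrite (act_additive hM1 m_gt0 Ia) (act_additive hM2 m_gt0 Ia).
  + by rewrite (actDl hM1) // (actDl hM2).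
  + by rewrite (actM hM1) // (actM hM2).
- by move=> k m a x m_gt0 mk Ia; rewrite (lam_act hM1) // (lam_act hM2).
Qed.

Variables (S1 : pfstruct M1) (S2 : pfstruct M2).

Definition sum_pf : pfstruct sum_promod :=
  @PFStruct A sum_promod (fun m => (pfL S1 m * pfL S2 m)%type)
    (fun m a x => (beta S1 m a x.1, beta S2 m a x.2))
    (fun k m x => (sigma S1 k m x.1, sigma S2 k m x.2)).

Lemma is_pfstruct_sum : is_pfstruct I S1 -> is_pfstruct I S2 -> is_pfstruct I sum_pf.
Proof.
move=> hS1 hS2 m m_gt0.
have [free1 tensor1 act1 sigma1 lam1] := hS1 m m_gt0.
have [free2 tensor2 act2 sigma2 lam2] := hS2 m m_gt0.
split=> /=.
- exact: free_abelian_prod.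
- exact: is_tensor_prod.
- by move=> a b x Ia Ib; rewrite act1 // act2.
- by move=> k mk x y; rewrite sigma1 // sigma2.
- by move=> k a x mk Ia; rewrite lam1 // lam2.
Qed.
End DirectSum.

Lemma eq_special (A : pzRingType) (I : A -> Prop) (M N : promod A) (S : pfstruct M)
    (f f' : forall m, pobj M m -> pobj N m) :
  special I S f -> (forall m x, (0 < m)%N -> f m x = f' m x) -> special I S f'.
Proof.
move=> [g [g_add g_lam g_beta]] eq_f; exists g; split=> // m a x m_gt0 Ia.
by rewrite -eq_f // g_beta.
Qed.

Section Homomorphisms.
Variables (A : pzRingType) (I : A -> Prop) (M N Q : promod A).

Lemma is_homD (f g : forall m, pobj M m -> pobj N m) : is_promod I N ->
  is_hom I f -> is_hom I g -> is_hom I (fun m x => f m x + g m x).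
Proof.
move=> hN [fD f_act f_lam] [gD g_act g_lam]; split.
- by move=> m m_gt0 x y; rewrite fD // gD // addrACA.
- by move=> m a x m_gt0 Ia; rewrite f_act // g_act // (act_additive hN m_gt0 Ia).
- by move=> k m x m_gt0 mk; rewrite (lam_additive hN m_gt0 mk) f_lam // g_lam.
Qed.

Lemma is_homN (f : forall m, pobj M m -> pobj N m) : is_promod I N ->
  is_hom I f -> is_hom I (fun m x => - f m x).
Proof.
move=> hN [fD f_act f_lam]; split.
- by move=> m m_gt0 x y; rewrite fD // opprD.
- by move=> m a x m_gt0 Ia; rewrite f_act // (additive_mapN (act_additive hN m_gt0 Ia)).
- by move=> k m x m_gt0 mk; rewrite (additive_mapN (lam_additive hN m_gt0 mk)) f_lam.
Qed.

Lemma is_homMn (f : forall m, pobj M m -> pobj N m) n : is_promod I N ->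
  is_hom I f -> is_hom I (fun m x => f m x *+ n).
Proof.
move=> hN [fD f_act f_lam]; split.
- by move=> m m_gt0 x y; rewrite fD // mulrnDl.
- by move=> m a x m_gt0 Ia; rewrite f_act // (additive_mapMn (act_additive hN m_gt0 Ia)).
- by move=> k m x m_gt0 mk; rewrite (additive_mapMn (lam_additive hN m_gt0 mk)) f_lam.
Qed.

Lemma is_hom_comp (f : forall m, pobj M m -> pobj N m) (g : forall m, pobj N m -> pobj Q m) :
  is_hom I f -> is_hom I g -> is_hom I (fun m x => g m (f m x)).
Proof.
move=> [fD f_act f_lam] [gD g_act g_lam]; split.
- by move=> m m_gt0 x y; rewrite fD // gD.
- by move=> m a x m_gt0 Ia; rewrite f_act // g_act.
- by move=> k m x m_gt0 mk; rewrite g_lam // f_lam.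
Qed.

Lemma is_hom_id : is_hom I (fun m (x : pobj M m) => x).
Proof. by []. Qed.

Lemma is_hom_fst : is_hom I (M := sum_promod M N) (fun m x => x.1).
Proof. by []. Qed.

Lemma is_hom_snd : is_hom I (M := sum_promod M N) (fun m x => x.2).
Proof. by []. Qed.

Lemma is_hom_inl : is_promod I N -> is_hom I (N := sum_promod M N) (fun m x => (x, 0)).
Proof.
move=> hN; split=> [m m_gt0 x y | m a x m_gt0 Ia | k m x m_gt0 mk] /=.
- by rewrite pairD addr0.
- by rewrite (additive_map0 (act_additive hN m_gt0 Ia)).
- by rewrite (additive_map0 (lam_additive hN m_gt0 mk)).
Qed.

Lemma is_hom_inr : is_promod I M -> is_hom I (N := sum_promod M N) (fun m y => (0, y)).
Proof.
move=> hM; split=> [m m_gt0 x y | m a x m_gt0 Ia | k m x m_gt0 mk] /=.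
- by rewrite pairD addr0.
- by rewrite (additive_map0 (act_additive hM m_gt0 Ia)).
- by rewrite (additive_map0 (lam_additive hM m_gt0 mk)).
Qed.
End Homomorphisms.

Arguments is_hom_id {A I M}.
Arguments is_hom_fst {A I M N}.
Arguments is_hom_snd {A I M N}.
Arguments is_hom_inl {A I M N}.
Arguments is_hom_inr {A I M N}.

Section Resolution.
Variables (A : pzRingType) (I : A -> Prop) (n : nat).
Hypothesis hI : two_sided_ideal I.

Record stage := Stage {
  stage_tgt : promod A;
  stage_src : promod A;
  stage_d : forall m, pobj stage_src m -> pobj stage_tgt m;
  stage_chi : forall m, pobj stage_src m -> pobj stage_src m;
  stage_pf : pfstruct stage_src }.
Arguments stage_d : clear implicits.
Arguments stage_chi : clear implicits.

Record stage_ok (s : stage) : Prop := StageOk {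
  is_promod_tgt : is_promod I (stage_tgt s);
  is_promod_src : is_promod I (stage_src s);
  is_hom_d : is_hom I (stage_d s);
  is_hom_chi : is_hom I (stage_chi s);
  is_pfstruct_stage : is_pfstruct I (stage_pf s);
  d_chi : forall m x, (0 < m)%N -> stage_d s m (stage_chi s m x) = 0;
  chi_cycle : forall m x, (0 < m)%N -> stage_d s m x = 0 -> stage_chi s m x = x *+ n }.

(* [d m 0 = 0] is only known for [m > 0]: cycles are cut out by [d x = d 0],
   which contains 0 at every level, and [ker_tr] falls back to 0 at the junk
   level [m = 0], where transition maps need not preserve cycles. *)
Definition ker (s : stage) m := {x : pobj (stage_src s) m | stage_d s m x = stage_d s m 0}.

Definition ker_tr (s : stage) k m (x : ker s k) : ker s m :=
  match pselect (stage_d s m (lam (stage_src s) k m (sval x)) = stage_d s m 0) with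
  | left dx0 => exist _ _ dx0
  | right _ => exist _ 0 erefl
  end.

Definition ker_incl (s : stage) m (x : ker s m) : pobj (stage_src s) m := sval x.

Arguments ker_tr : clear implicits.
Arguments ker_incl : clear implicits.

Definition next_src (s : stage) := sum_promod (cover I (ker_tr s)) (stage_src s).

Definition next_d (s : stage) m (p : pobj (next_src s) m) : pobj (stage_src s) m :=
  cover_eval (ker_incl s) p.1 + stage_chi s m p.2.

Arguments next_d : clear implicits.

Definition next_chi (s : stage) m (p : pobj (next_src s) m) : pobj (next_src s) m :=
  p *+ n - (0, next_d s m p).

Arguments next_chi : clear implicits.

Definition next (s : stage) : stage :=
  Stage (next_d s) (next_chi s) (sum_pf (cover_pf I (ker_tr s)) (stage_pf s)).

Definition init (P : promod A) (SP : pfstruct P) : stage :=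
  Stage (fun m (_ : pobj P m) => 0 : pobj P m) (fun m x => x *+ n) SP.

Section NextStage.
Variables (s : stage) (hs : stage_ok s).

Local Notation C := (stage_src s).
Local Notation d := (stage_d s).

Lemma stage_d0 m : (0 < m)%N -> d m 0 = 0.
Proof. by move=> m_gt0; case: (is_hom_d hs) => + _ _; move/(_ m m_gt0)/additive_map0. Qed.

Lemma ker_incl_tr k m x : (0 < m)%N -> (m <= k)%N ->
  ker_incl s m (ker_tr s k m x) = lam C k m (ker_incl s k x).
Proof.
move=> m_gt0 mk; rewrite /ker_tr; case: pselect => // - [].
have [_ _ d_lam] := is_hom_d hs.
rewrite -d_lam // (svalP x) stage_d0 ?(leq_trans m_gt0 mk) //.
by rewrite (additive_map0 (lam_additive (is_promod_tgt hs) m_gt0 mk)) stage_d0.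
Qed.

Lemma ker_incl_inj m : injective (ker_incl s m).
Proof. by move=> [x dx] [y dy] /= xy; apply: eq_exist. Qed.

Lemma ker_tr_id m x : (0 < m)%N -> ker_tr s m m x = x.
Proof.
by move=> m_gt0; apply: ker_incl_inj; rewrite ker_incl_tr // (lam_id (is_promod_src hs)).
Qed.

Lemma ker_tr_comp l k m x : (0 < m)%N -> (m <= k)%N -> (k <= l)%N ->
  ker_tr s k m (ker_tr s l k x) = ker_tr s l m x.
Proof.
move=> m_gt0 mk kl; have k_gt0 := leq_trans m_gt0 mk.
apply: ker_incl_inj; rewrite !ker_incl_tr ?(leq_trans mk kl) //.
exact: (lam_comp (is_promod_src hs)).
Qed.

Lemma is_promod_cover_ker : is_promod I (cover I (ker_tr s)).
Proof. exact: is_promod_cover hI (fun m x m_gt0 => ker_tr_id x m_gt0) ker_tr_comp. Qed.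

Lemma is_hom_cover_ker_incl : is_hom I (M := cover I (ker_tr s)) (cover_eval (ker_incl s)).
Proof. exact: is_hom_cover_eval hI (is_promod_src hs) ker_incl_tr. Qed.

Lemma cover_ker_incl_special : special I (cover_pf I (ker_tr s)) (cover_eval (ker_incl s)).
Proof. exact: cover_eval_special (is_promod_src hs) ker_incl_tr. Qed.

Lemma is_hom_next_d : is_hom I (next_d s).
Proof.
apply: is_homD (is_promod_src hs) _ _.
- exact: is_hom_comp is_hom_fst is_hom_cover_ker_incl.
- exact: is_hom_comp is_hom_snd (is_hom_chi hs).
Qed.

Lemma d_cover_ker_incl m (f : cover_obj I (ker s) m) : (0 < m)%N ->
  d m (cover_eval (ker_incl s) f) = 0.
Proof.
move=> m_gt0; have [d_add d_act _] := is_hom_d hs.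
rewrite /cover_eval (malg_lift_comp _ _ (d_add m m_gt0)) /malg_lift big1 // => -[x dx] _.
rewrite d_act //=; last exact: coefP.
have -> : d m x = 0 by rewrite dx stage_d0.
exact: additive_map0 (act_additive (is_promod_tgt hs) m_gt0 (coefP _)).
Qed.

Lemma d_next_d m p : (0 < m)%N -> d m (next_d s m p) = 0.
Proof.
move=> m_gt0; have [d_add _ _] := is_hom_d hs.
by rewrite /next_d d_add // d_cover_ker_incl // d_chi // addr0.
Qed.

Lemma next_ok : stage_ok (next s).
Proof.
have hN : is_promod I (next_src s) := is_promod_sum is_promod_cover_ker (is_promod_src hs).
have [d'_add _ _] := is_hom_next_d.
split=> //=.
- exact: is_promod_src hs.
- exact: is_hom_next_d.
- apply: is_homD hN (is_homMn _ hN is_hom_id) (is_homN hN _).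
  exact: is_hom_comp is_hom_next_d (is_hom_inr is_promod_cover_ker).
- exact: is_pfstruct_sum (is_pfstruct_cover _ hI) (is_pfstruct_stage hs).
- move=> m p m_gt0; rewrite /next_chi d'_add // (additive_mapN (d'_add m m_gt0)).
  rewrite (additive_mapMn (d'_add m m_gt0)) {2}/next_d /cover_eval /= malg_lift0 add0r.
  by rewrite chi_cycle ?d_next_d // subrr.
- by move=> m p m_gt0 dp0; rewrite /next_chi dp0; apply: subr0.
Qed.

Lemma cycle_act_boundary m a x : (0 < m)%N -> Ipow I m a -> d m x = 0 ->
  exists z, act C m a x = next_d s m z.
Proof.
move=> m_gt0 Ia dx0; have dx : d m x = d m 0 by rewrite dx0 stage_d0.
exists (<< to_coef I m a *g (exist _ x dx : classicType (ker s m)) >>, 0).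
rewrite /next_d /= cover_evalU ?to_coefK //; last exact: is_promod_src hs.
have [chi_add _ _] := is_hom_chi hs.
by rewrite (additive_map0 (chi_add m m_gt0)) addr0.
Qed.

Lemma cycle_mulrn_boundary m x : (0 < m)%N -> d m x = 0 ->
  exists z, x *+ n = next_d s m z.
Proof.
by move=> m_gt0 dx0; exists (0, x); rewrite /next_d /cover_eval /= malg_lift0 add0r chi_cycle.
Qed.
End NextStage.

Lemma init_ok (P : promod A) (SP : pfstruct P) :
  is_promod I P -> is_pfstruct I SP -> stage_ok (init SP).
Proof.
move=> hP hSP; split=> //=.
- split=> [m m_gt0 x y | m a x m_gt0 Ia | k m x m_gt0 mk]; first by rewrite addr0.
  + by rewrite (additive_map0 (act_additive hP m_gt0 Ia)).
  + by rewrite (additive_map0 (lam_additive hP m_gt0 mk)).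
- exact: is_homMn hP is_hom_id.
Qed.
End Resolution.

Arguments stage_d {A} s m.
Arguments stage_chi {A} s m.
Arguments ker_tr {A} s k m.
Arguments ker_incl {A} s m.

Section Construction.
Variables (A : pzRingType) (I : A -> Prop) (n : nat) (P : promod A) (SP : pfstruct P).
Hypotheses (hI : two_sided_ideal I) (hP : is_promod I P) (hSP : is_pfstruct I SP).

Definition resolution q := iter q.+1 (next I n) (init n SP).

Definition res_C q := stage_src (resolution q).

Definition res_d q m : pobj (res_C q.+1) m -> pobj (res_C q) m :=
  stage_d (resolution q.+1) m.

Definition res_eps m : pobj (res_C 0) m -> pobj P m := stage_d (resolution 0) m.

Lemma resolution_ok q : stage_ok I n (resolution q).
Proof. by elim: q => [|q IHq]; apply: next_ok => //; apply: init_ok. Qed.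

Lemma is_aug_complex : aug_complex I res_d res_eps.
Proof.
split=> [q | q | | q m x m_gt0 | m x m_gt0].
- exact: is_promod_src (resolution_ok q).
- exact: is_hom_d (resolution_ok q.+1).
- exact: is_hom_d (resolution_ok 0).
- exact: (d_next_d (resolution_ok q.+1) x m_gt0).
- exact: (d_next_d (resolution_ok 0) x m_gt0).
Qed.

Lemma res_homology_act m a : (0 < m)%N -> Ipow I m a ->
  homology_killed_by res_d res_eps (fun M m x y => act M m a x = y) m.
Proof.
move=> m_gt0 Ia; split=> [y | x | q x].
- exact: (cycle_act_boundary (init_ok n hP hSP) (x := y) m_gt0 Ia erefl).
- exact: (cycle_act_boundary (resolution_ok 0) (x := x) m_gt0 Ia).
- exact: (cycle_act_boundary (resolution_ok q.+1) (x := x) m_gt0 Ia).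
Qed.

Lemma res_homology_mulrn m : (0 < m)%N ->
  homology_killed_by res_d res_eps (fun M m x y => x *+ n = y) m.
Proof.
move=> m_gt0; split=> [y | x | q x].
- exact: (cycle_mulrn_boundary (init_ok n hP hSP) (x := y) m_gt0 erefl).
- exact: (cycle_mulrn_boundary (resolution_ok 0) (x := x) m_gt0).
- exact: (cycle_mulrn_boundary (resolution_ok q.+1) (x := x) m_gt0).
Qed.

Lemma res_eps_special : n = 0%N -> special I (stage_pf (resolution 0)) res_eps.
Proof.
move=> n0; have [g [g_add g_lam g_beta]] := cover_ker_incl_special (init_ok n hP hSP).
exists (fun m l => g m l.1); split=> [m m_gt0 x y | k m x m_gt0 mk | m a x m_gt0 Ia] /=.
- exact: g_add.
- exact: g_lam.
- by rewrite /res_eps /= /next_d /= n0 mulr0n addr0 g_beta.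
Qed.

Lemma res_eps_pv_special : pv_special I n res_eps.
Proof.
have hs0 := init_ok n hP hSP; have hF := is_promod_cover_ker hI hs0.
exists (cover I (ker_tr (init n SP))), P, (fun m f => (f, 0)), (fun m y => (0, y)).
exists (cover_pf I (ker_tr (init n SP))), SP; split.
- by split=> //; [exact: is_hom_inl | exact: is_hom_inr hF].
- by move=> m _; exists id => -[x y]; rewrite /= pairD addr0 add0r.
- by split=> //; apply: is_pfstruct_cover.
- apply: (eq_special (N := P) (cover_ker_incl_special hs0)) => m f m_gt0.
  by rewrite /res_eps /= /next_d /= mul0rn addr0.
- exists (fun m y => y); split=> [|m y m_gt0]; first exact: is_hom_id.
  by rewrite /res_eps /= /next_d /cover_eval /= malg_lift0 add0r.
Qed.
End Construction.

Arguments res_d {A} I n {P} SP q m.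
Arguments res_eps {A} I n {P} SP m.

Local Close Scope ring_scope.

Theorem corollary1p5 (A : pzRingType) (I : A -> Prop) (p v : nat)
  (P : promod A) :
  two_sided_ideal I -> prime p -> (0 < v)%N ->
  is_promod I P -> pseudo_free I P ->
  special_complex I P /\ pv_special_complex I (p ^ v) P.
Proof.
move=> hI _ _ hP [SP hSP]; split.
- exists (res_C I 0 SP), (res_d I 0 SP), (res_eps I 0 SP),
    (fun q => stage_pf (resolution I 0 SP q)).
  split=> [||| m m_gt0 a Ia].
  + exact: is_aug_complex.
  + by move=> q; apply: is_pfstruct_stage (resolution_ok _ hI hP hSP q).
  + exact: res_eps_special.
  + exact: res_homology_act.
- exists (res_C I (p ^ v) SP), (res_d I (p ^ v) SP), (res_eps I (p ^ v) SP).
  split=> [||| m m_gt0].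
  + exact: is_aug_complex.
  + move=> q; exists (stage_pf (resolution I (p ^ v) SP q)).
    exact: is_pfstruct_stage (resolution_ok _ hI hP hSP q).
  + exact: res_eps_pv_special.
  + by split=> [a Ia|]; [apply: res_homology_act | apply: res_homology_mulrn].
Qed.
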